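(* Let $\mathcal{I}$ be a proper admissible ideal on $\omega$ and $X$ a topological space. If ONE does not have a winning strategy in the $\mathcal{I}$-Hurewicz game $\mathcal{I}H(X)$, then $X$ satisfies $S_{fin}(\Lambda, \mathcal{I}\text{-}\mathcal{O}^{gp})$.
   Context: The game $\mathcal{I}H(X)$: in round $n\in\omega$ ONE chooses an open cover $\mathcal{U}_n$ of $X$ and TWO chooses a finite $\mathcal{V}_n\subseteq\mathcal{U}_n$; TWO wins if for each $x\in X$, $\{n : x\notin\bigcup\mathcal{V}_n\}\in\mathcal{I}$, otherwise ONE wins. $\Lambda$ denotes the collection of large covers of $X$ (open covers such that each point of $X$ belongs to infinitely many members). An open cover $\mathcal{U}$ is $\mathcal{I}$-groupable if $\mathcal{U}=\bigcup_n\mathcal{U}_n$ with the $\mathcal{U}_n$ finite, pairwise disjoint, and for each $x$, $\{n : x\notin\bigcup\mathcal{U}_n\}\in\mathcal{I}$; $\mathcal{I}\text{-}\mathcal{O}^{gp}$ is the collection of such covers. $S_{fin}(\Lambda,\mathcal{I}\text{-}\mathcal{O}^{gp})$: for each sequence $\langle\mathcal{U}_n\rangle$ of large covers there are finite $\mathcal{V}_n\subseteq\mathcal{U}_n$ with $\bigcup_n\mathcal{V}_n\in\mathcal{I}\text{-}\mathcal{O}^{gp}$. *)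

From HB Require Import structures.
From mathcomp Require Import all_boot all_classical all_reals all_analysis.
Set Implicit Arguments. Unset Strict Implicit. Unset Printing Implicit Defensive.
Local Open Scope classical_set_scope.

Definition is_ideal (I : set (set nat)) : Prop :=
  I set0 /\
  (forall A B : set nat, B `<=` A -> I A -> I B) /\
  (forall A B : set nat, I A -> I B -> I (A `|` B)).

Definition proper_ideal (I : set (set nat)) : Prop := is_ideal I /\ ~ I setT.

Definition admissible_ideal (I : set (set nat)) : Prop :=
  forall A : set nat, finite_set A -> I A.

Definition open_cover {X : topologicalType} (U : set (set X)) : Prop :=
  (forall V, U V -> open V) /\ (forall x : X, exists2 V, U V & V x).

Definition large_cover {X : topologicalType} (U : set (set X)) : Prop :=
  open_cover U /\ (forall x : X, ~ finite_set [set V | U V /\ V x]).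

Definition I_groupable {X : topologicalType} (I : set (set nat))
    (U : set (set X)) : Prop :=
  open_cover U /\
  exists Us : nat -> set (set X),
    U = \bigcup_n Us n /\
    (forall n, finite_set (Us n)) /\
    (forall m n, m <> n -> Us m `&` Us n = set0) /\
    (forall x : X, I [set n | ~ (\bigcup_(V in Us n) V) x]).

Definition Sfin_Lambda_IOgp (X : topologicalType) (I : set (set nat)) : Prop :=
  forall Us : nat -> set (set X), (forall n, large_cover (Us n)) ->
  exists Vs : nat -> set (set X),
    (forall n, finite_set (Vs n) /\ Vs n `<=` Us n) /\
    I_groupable I (\bigcup_n Vs n).

(* The game I H(X).  A strategy for ONE assigns to each finite sequence of
   TWO's previous moves (V_0, ..., V_{n-1}) ONE's next move U_n, which must
   be an open cover. *)
Definition ONE_strategy (X : topologicalType) :=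
  seq (set (set X)) -> set (set X).

Definition legal_ONE_strategy {X : topologicalType} (sigma : ONE_strategy X) :=
  forall s, open_cover (sigma s).

Definition play_by {X : topologicalType} (sigma : ONE_strategy X)
    (Vs : nat -> set (set X)) : Prop :=
  forall n, finite_set (Vs n) /\ Vs n `<=` sigma (mkseq Vs n).

Definition TWO_wins {X : topologicalType} (I : set (set nat))
    (Vs : nat -> set (set X)) : Prop :=
  forall x : X, I [set n | ~ (\bigcup_(V in Vs n) V) x].

Definition ONE_winning_strategy (X : topologicalType) (I : set (set nat))
    (sigma : ONE_strategy X) : Prop :=
  legal_ONE_strategy sigma /\
  forall Vs, play_by sigma Vs -> ~ TWO_wins I Vs.

Definition ONE_has_winning_strategy_IH (X : topologicalType)
    (I : set (set nat)) : Prop :=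
  exists sigma : ONE_strategy X, ONE_winning_strategy I sigma.

From mathcomp Require Import all_boot all_classical all_reals all_analysis.
Set Implicit Arguments. Unset Strict Implicit. Unset Printing Implicit Defensive.
Local Open Scope classical_set_scope.

(* ONE plays, in round n, the n-th large cover with every set already chosen
   by TWO removed.  Removing finitely many members of a large cover leaves an
   open cover, so this is a legal strategy; since it is not winning, TWO wins
   some play against it.  TWO's moves are then finite, pairwise disjoint
   selections from the given covers, and as the ideal is proper every point
   is covered by some move: this is the required I-grouping. *)

Lemma large_cover_setD_finite (X : topologicalType) (U F : set (set X)) :
  large_cover U -> finite_set F -> open_cover (U `\` F).
Proof.
move=> [[U_open U_cover] U_large] finF; split=> [V [/U_open] //|x].
apply: contrapT => uncovered; apply: (U_large x).
apply: sub_finite_set finF => V [UV Vx].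
by apply: contrapT => FnV; apply: uncovered; exists V.
Qed.

Section FreshStrategy.
Variables (X : topologicalType) (Us : nat -> set (set X)).

(* Infinite earlier moves are never removed; they only occur in illegal
   plays, but removing them could make ONE's move fail to cover X. *)
Definition chosen_before (s : seq (set (set X))) : set (set X) :=
  \bigcup_(i in [set i | (i < size s)%N /\ finite_set (nth set0 s i)])
    nth set0 s i.

Definition fresh_strategy : ONE_strategy X :=
  fun s => Us (size s) `\` chosen_before s.

Lemma finite_chosen_before (s : seq (set (set X))) :
  finite_set (chosen_before s).
Proof.
apply: bigcup_finite => [|i [] //].
by apply: sub_finite_set (finite_II (size s)) => i [].
Qed.

Lemma fresh_strategy_legal :
  (forall n, large_cover (Us n)) -> legal_ONE_strategy fresh_strategy.
Proof.
move=> Us_large s.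
exact: large_cover_setD_finite (Us_large _) (finite_chosen_before s).
Qed.

Variable Vs : nat -> set (set X).
Hypothesis Vs_play : play_by fresh_strategy Vs.

Lemma fresh_play_sub n : Vs n `<=` Us n.
Proof. by move=> V /(Vs_play n).2 []; rewrite size_mkseq. Qed.

Lemma fresh_play_disjoint m n : m <> n -> Vs m `&` Vs n = set0.
Proof.
suff earlier_disjoint i j : (i < j)%N -> Vs i `&` Vs j = set0.
  by move/eqP; rewrite neq_ltn => /orP[/earlier_disjoint|/earlier_disjoint];
    rewrite // setIC.
move=> ij; apply/seteqP; split=> [V [Vi /(Vs_play j).2 [_]]|//]; apply.
by exists i; rewrite /= ?size_mkseq ?nth_mkseq //; split=> //; apply: (Vs_play i).1.
Qed.

End FreshStrategy.

Lemma not_winning_legal_strategy (X : topologicalType) (I : set (set nat))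
    (sigma : ONE_strategy X) :
  legal_ONE_strategy sigma -> ~ ONE_winning_strategy I sigma ->
  exists Vs, play_by sigma Vs /\ TWO_wins I Vs.
Proof.
move=> legal not_winning; apply: contrapT => no_play; apply: not_winning.
by split=> // Vs play TWO_won; apply: no_play; exists Vs.
Qed.

Lemma TWO_wins_cover (X : topologicalType) (I : set (set nat))
    (Vs : nat -> set (set X)) :
  ~ I setT -> TWO_wins I Vs -> forall x, exists2 V, (\bigcup_n Vs n) V & V x.
Proof.
move=> I_proper TWO_won x; apply: contrapT => uncovered; apply: I_proper.
suff -> : [set: nat] = [set n | ~ (\bigcup_(V in Vs n) V) x] by [].
by apply/seteqP; split=> n // _ [V Vn Vx]; apply: uncovered; exists V => //; exists n.
Qed.

Theorem mainTheorem2 (I : set (set nat)) (X : topologicalType) :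
  proper_ideal I -> admissible_ideal I ->
  ~ ONE_has_winning_strategy_IH X I ->
  Sfin_Lambda_IOgp X I.
Proof.
move=> [_ I_proper] _ no_winning Us Us_large.
have legal := fresh_strategy_legal Us_large.
have [Vs [play TWO_won]] := not_winning_legal_strategy legal
  (fun winning => no_winning (ex_intro _ _ winning)).
have Vs_finite n : finite_set (Vs n) := (play n).1.
exists Vs; split=> [n|]; first by split; [|exact: fresh_play_sub play n].
split; last first.
  by exists Vs; split=> //; split=> //; split; [exact: fresh_play_disjoint play|].
split; last exact: TWO_wins_cover I_proper TWO_won.
move=> V [n _ /(fresh_play_sub play) UnV].
by have [[Us_open _] _] := Us_large n; exact: Us_open.
Qed.
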